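(* Let $L\geq\delta\geq 2$ and let $G$ be an $(L,\delta)$-almost-biregular graph. Then $G$ has a $64$-almost-regular subgraph with average degree at least $\frac{\delta}{16\log L}$.
   Context: Logarithms are to base $2$. A graph is $K$-almost-regular if its maximum degree is at most $K$ times its minimum degree. A bipartite graph $G$ is $(L,d)$-almost-biregular if it has parts $A$ and $B$ (with $A$ non-empty) such that $d_G(v)=d$ for every $v\in B$, and, writing $D=e(G)/|A|$, we have $D\geq d$ (equivalently $|A|\leq|B|$) and $d_G(u)\leq LD$ for every $u\in A$. Subgraphs are required to be non-empty; average degree is $2e/|V|$. *)

From mathcomp Require Import all_boot.
From Stdlib Require Import Reals.
Set Implicit Arguments. Unset Strict Implicit. Unset Printing Implicit Defensive.

Definition log2 (x : R) : R := (ln x / ln 2)%R.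

Section Graphs.
Variable T : finType.

Definition simple_graph (e : rel T) : Prop :=
  (forall x y, e x y = e y x) /\ (forall x, e x x = false).

Definition deg_in (S : {set T}) (F : rel T) (x : T) : nat :=
  #|[set y in S | F x y]|.

Definition nedges_in (S : {set T}) (F : rel T) : R :=
  (INR #|[set p : T * T | [&& p.1 \in S, p.2 \in S & F p.1 p.2]]| / 2)%R.

Definition is_subgraph (e : rel T) (S : {set T}) (F : rel T) : Prop :=
  S != set0 /\ (forall x y, F x y = F y x) /\
  (forall x y, x \in S -> y \in S -> F x y -> e x y).

Definition avg_deg (S : {set T}) (F : rel T) : R :=
  (2 * nedges_in S F / INR #|S|)%R.

Definition almost_regular (K : R) (S : {set T}) (F : rel T) : Prop :=
  forall x y, x \in S -> y \in S ->
    (INR (deg_in S F x) <= K * INR (deg_in S F y))%R.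

Definition almost_biregular (L : R) (d : nat) (e : rel T) : Prop :=
  exists A B : {set T},
    A != set0 /\ [disjoint A & B] /\ A :|: B = setT /\
        (forall x y, e x y -> (x \in A /\ y \in B) \/ (x \in B /\ y \in A)) /\
        (forall v, v \in B -> deg_in setT e v = d) /\
        (INR d <= nedges_in setT e / INR #|A|)%R /\
        (forall u, u \in A ->
           (INR (deg_in setT e u) <= L * (nedges_in setT e / INR #|A|))%R).
End Graphs.

From mathcomp Require Import all_boot zify.
From Stdlib Require Import Reals Lra ZArith.
Set Implicit Arguments. Unset Strict Implicit. Unset Printing Implicit Defensive.

(* Let D = e(G)/|A| >= delta and tau = delta / (16 log L).  If tau <= 1 a single edge
   will do.  Otherwise, vertices of A of degree below D/2 carry at most half of the edges,
   and the remaining degrees lie in [D/2, L D], which is covered by O(log L) classes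
   [k, 4k); so some class Aj carries at least e(G)/(4 log L) edges.  Among the edges from
   Aj to B take a maximal set E with all degrees at most C ~ 64 tau in which every vertex
   of B has degree 0 or at least R0 ~ 2 tau.  By maximality, an edge at Aj outside E meets
   a vertex of E-degree C, or joins an E-isolated vertex b of B to one of the fewer than
   R0 unsaturated neighbours of b.  Counting these edges gives
   |E| >= tau (|Aj| + |B_E|), where B_E are the vertices of B covered by E, so the graph E
   on Aj + B_E has average degree at least 2 tau; peeling vertices of degree < tau leaves a
   subgraph of minimum degree >= tau and maximum degree <= C <= 64 tau. *)

Lemma card_pairs_sum_fst (X Y : finType) (f : X -> Y -> bool) :
  #|[set p : X * Y | f p.1 p.2]| = \sum_(x : X) #|[set y | f x y]|.
Proof.
rewrite -sum1_card (eq_bigl (fun p => xpredT p.1 && f p.1 p.2)); last first.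
  by move=> p; rewrite inE.
rewrite -(pair_big_dep xpredT f (fun _ _ => 1)).
by apply: eq_bigr => x _; rewrite -sum1_card; apply: eq_bigl => y; rewrite inE.
Qed.

Lemma card_pairs_sum_snd (X Y : finType) (f : X -> Y -> bool) :
  #|[set p : X * Y | f p.1 p.2]| = \sum_(y : Y) #|[set x | f x y]|.
Proof.
have card_sum (Z : finType) (b : pred Z) : #|[set z | b z]| = \sum_z (b z : nat).
  by rewrite -sum1_card big_mkcond; apply: eq_bigr => z _; rewrite inE; case: (b z).
rewrite card_pairs_sum_fst.
under eq_bigr => x _ do rewrite card_sum.
under [RHS]eq_bigr => y _ do rewrite card_sum.
exact: exchange_big.
Qed.

Lemma sum_card_condl (X Y : finType) (P : pred X) (Q : X -> Y -> bool) :
  \sum_(x : X) #|[set y | P x && Q x y]| = \sum_(x | P x) #|[set y | Q x y]|.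
Proof.
rewrite [RHS]big_mkcond; apply: eq_bigr => x _; case: (P x) => //.
by apply/eqP; rewrite cards_eq0; apply/eqP/setP => y; rewrite !inE.
Qed.

Lemma sum_nat_of_bool (T : finType) (A : {set T}) (b : pred T) :
  \sum_(x in A) (b x : nat) = #|[set x in A | b x]|.
Proof.
rewrite -sum1_card [RHS]big_mkcond [LHS]big_mkcond; apply: eq_bigr => x _.
by rewrite !inE; case: (x \in A); case: (b x).
Qed.

Lemma exists_subset_card (T : finType) (Y : {set T}) n :
  n <= #|Y| -> exists2 X : {set T}, X \subset Y & #|X| = n.
Proof.
elim: n => [|n IHn] leY; first by exists set0; rewrite ?sub0set ?cards0.
have [X XY cardX] := IHn (ltnW leY).
have /set0Pn[y] : Y :\: X != set0.
  rewrite -card_gt0 cardsD (setIidPr XY); lia.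
rewrite inE => /andP[yX yY]; exists (y |: X); last by rewrite cardsU1 yX cardX.
by rewrite subUset sub1set yY.
Qed.

Lemma INR_leq m n : m <= n -> (INR m <= INR n)%R.
Proof. by move/leP; apply: le_INR. Qed.

Lemma INR_ltn m n : m < n -> (INR m < INR n)%R.
Proof. by move/ltP; apply: lt_INR. Qed.

Lemma leq_of_INR m n : (INR m <= INR n)%R -> m <= n.
Proof. by move/INR_le/leP. Qed.

Lemma ltn_of_INR m n : (INR m < INR n)%R -> m < n.
Proof. by move/INR_lt/ltP. Qed.

Lemma INR_sum_le (I : finType) (P : pred I) (f : I -> nat) (x : R) :
  (forall i, P i -> INR (f i) <= x)%R -> (INR (\sum_(i | P i) f i) <= INR #|P| * x)%R.
Proof.
move=> fx; rewrite -sum1_card; elim/big_ind2: _ => [|a b c d ? ?|i Pi] /=.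
- lra.
- rewrite !plus_INR; lra.
- rewrite Rmult_1_l; exact: fx.
Qed.

Lemma INR_sum_ge (I : finType) (P : pred I) (f : I -> nat) (x : R) :
  (forall i, P i -> x <= INR (f i))%R -> (INR #|P| * x <= INR (\sum_(i | P i) f i))%R.
Proof.
move=> fx; rewrite -sum1_card; elim/big_ind2: _ => [|a b c d ? ?|i Pi] /=.
- lra.
- rewrite !plus_INR; lra.
- rewrite Rmult_1_l; exact: fx.
Qed.

Section RealFacts.
Local Open Scope R_scope.

Definition Rleb (x y : R) : bool := if Rle_dec x y then true else false.

Lemma RlebP x y : reflect (x <= y) (Rleb x y).
Proof. by rewrite /Rleb; case: Rle_dec => h; constructor. Qed.

Lemma exists_nat_floor (x : R) : 0 <= x -> exists n : nat, INR n <= x < INR n + 1.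
Proof.
move=> x_ge0; have [up_gt up_le] := archimed x.
have up_gt0 : (0 < up x)%Z by apply: lt_0_IZR; lra.
exists (Z.to_nat (up x - 1)).
rewrite INR_IZR_INZ Z2Nat.id; last by lia.
rewrite minus_IZR; lra.
Qed.

Lemma exists_nat_ceil (x : R) : 0 <= x -> exists n : nat, INR n - 1 < x <= INR n.
Proof.
move=> /exists_nat_floor[n [n_le n_gt]].
have [<-|n_neq] := Req_dec (INR n) x; first by exists n; lra.
by exists n.+1; rewrite S_INR; lra.
Qed.

Lemma log2_ge1 (L : R) : 2 <= L -> 1 <= log2 L.
Proof.
move=> L_ge2; have ln2_gt0 : 0 < ln 2 by rewrite -ln_1; apply: ln_increasing; lra.
have : ln 2 <= ln L.
  by case: (Rle_lt_or_eq_dec 2 L) => // [?|<-]; [apply: Rlt_le; apply: ln_increasing | ]; lra.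
rewrite /log2 => ln_le; apply: (Rmult_le_reg_r (ln 2)) => //.
by field_simplify; lra.
Qed.

Lemma pow4_gt_twice (L : R) (N : nat) : 2 <= L -> log2 L + 1 < 2 * INR N -> 2 * L < 4 ^ N.
Proof.
move=> L_ge2 N_gt; have ln2_gt0 : 0 < ln 2 by rewrite -ln_1; apply: ln_increasing; lra.
have -> : 4 ^ N = 2 ^ (2 * N) by rewrite pow_mult; congr (_ ^ _); rewrite /=; lra.
apply: ln_lt_inv; [lra | apply: pow_lt; lra |].
rewrite ln_pow ?ln_mult; try lra.
have -> : ln L = log2 L * ln 2 by rewrite /log2; field; lra.
rewrite mult_INR /=; nra.
Qed.

Lemma dyadic_class (D x : R) (n : nat) : 0 < D -> D / 2 <= x < D / 2 * 4 ^ n ->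
  exists2 i : nat, (i < n)%nat & D / 2 * 4 ^ i <= x < 4 * (D / 2 * 4 ^ i).
Proof.
move=> D_gt0; elim: n => [|n IHn] [x_ge x_lt]; first by move: x_lt; rewrite /=; lra.
have [x_lt'|x_ge'] := Rlt_le_dec x (D / 2 * 4 ^ n).
  by have [i i_lt i_cls] := IHn (conj x_ge x_lt'); exists i => //; apply: ltnW.
by exists n => //; move: x_lt; rewrite /=; lra.
Qed.

End RealFacts.

Section SubgraphDegrees.
Variables (T : finType) (F : rel T).

Lemma deg_setT x : deg_in setT F x = #|[set y | F x y]|.
Proof. by apply: eq_card => y; rewrite !inE. Qed.

Lemma nedges_in_sum_deg (S : {set T}) :
  nedges_in S F = (INR (\sum_(x in S) deg_in S F x) / 2)%R.
Proof.
rewrite /nedges_in (card_pairs_sum_fst (fun x y => [&& x \in S, y \in S & F x y])).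
by rewrite (sum_card_condl (mem S) (fun x y => (y \in S) && F x y)).
Qed.

Lemma deg_setD1 (S : {set T}) v x :
  v \in S -> deg_in S F x = deg_in (S :\ v) F x + F x v.
Proof.
move=> vS; rewrite /deg_in (cardsD1 v) addnC; congr (_ + _).
  by apply: eq_card => y; rewrite !inE andbA.
by rewrite !inE vS.
Qed.

Hypothesis F_sym : forall x y, F x y = F y x.

(* Deleting a vertex of degree < t lowers the degree sum by less than 2t, so the
   invariant "degree sum > 2 (t - 1) |S|" survives until no such vertex is left. *)
Lemma min_deg_subgraph (t : nat) (S0 : {set T}) :
  2 * (t - 1) * #|S0| < \sum_(x in S0) deg_in S0 F x ->
  exists2 S : {set T}, S != set0 & forall x, x \in S -> t <= deg_in S F x.
Proof.
move: {2}#|S0| (erefl #|S0|) => n; elim: n S0 => [|n IHn] S0 cardS0 sum_gt.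
  by move: sum_gt; rewrite (cards0_eq cardS0) big_set0 cards0; lia.
have [/forall_inP deg_ge|] := boolP [forall x in S0, t <= deg_in S0 F x].
  by exists S0 => //; rewrite -card_gt0 cardS0.
rewrite negb_forall_in => /existsP[v /andP[vS0]]; rewrite -ltnNge => deg_v.
have cardS0v : #|S0 :\ v| = n by move: cardS0; rewrite (cardsD1 v) vS0; lia.
have sum_le : \sum_(x in S0) deg_in S0 F x <=
              2 * deg_in S0 F v + \sum_(x in S0 :\ v) deg_in (S0 :\ v) F x.
  rewrite (big_setD1 v vS0) /= (eq_bigr _ (fun x _ => deg_setD1 x vS0)).
  rewrite big_split /= sum_nat_of_bool.
  have : #|[set x in S0 :\ v | F x v]| <= deg_in S0 F v.
    apply: subset_leq_card; apply/subsetP => y; rewrite !inE F_sym.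
    by case/andP => /andP[_ ->] ->.
  lia.
by apply: (IHn _ cardS0v); move: sum_gt sum_le deg_v; rewrite cardS0 cardS0v; nia.
Qed.

Lemma almost_regular_avg_deg (K : R) (t : nat) (S : {set T}) :
  (0 <= K)%R -> S != set0 ->
  (forall x, x \in S -> t <= deg_in S F x) ->
  (forall x, x \in S -> INR (deg_in S F x) <= K * INR t)%R ->
  almost_regular K S F /\ (INR t <= avg_deg S F)%R.
Proof.
move=> K_ge0 S_neq0 deg_ge deg_le; split.
  move=> x y xS yS; apply: (Rle_trans _ _ _ (deg_le x xS)).
  by apply: Rmult_le_compat_l => //; apply/INR_leq/deg_ge.
have cardS_gt0 : (0 < INR #|S|)%R by apply: (INR_ltn (m := 0)); rewrite card_gt0.
have := INR_sum_ge (fun x xS => INR_leq (deg_ge x xS)).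
rewrite /avg_deg nedges_in_sum_deg => sum_ge.
apply: (Rmult_le_reg_r (INR #|S|)) => //.
by field_simplify; [rewrite Rmult_comm | lra].
Qed.

End SubgraphDegrees.

Section EdgeSets.
Variable T : finType.
Implicit Types (E : {set T * T}) (X : {set T}).

Definition deg_fst E a := #|[set b | (a, b) \in E]|.
Definition deg_snd E b := #|[set a | (a, b) \in E]|.

Lemma card_sum_deg_fst E : #|E| = \sum_x deg_fst E x.
Proof.
rewrite -(card_pairs_sum_fst (fun x y => (x, y) \in E)).
by apply: eq_card => p; rewrite inE -surjective_pairing.
Qed.

Lemma card_sum_deg_snd E : #|E| = \sum_y deg_snd E y.
Proof.
rewrite -(card_pairs_sum_snd (fun x y => (x, y) \in E)).
by apply: eq_card => p; rewrite inE -surjective_pairing.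
Qed.

Section AddStar.
Variables (E : {set T * T}) (b : T) (X : {set T}).
Hypothesis X_new : forall a, a \in X -> (a, b) \notin E.

Lemma deg_fst_setU_star x : deg_fst (E :|: setX X [set b]) x = deg_fst E x + (x \in X).
Proof.
rewrite /deg_fst; have [xX|xX] := boolP (x \in X); last first.
  by rewrite addn0; apply: eq_card => y; rewrite !inE /= (negbTE xX) orbF.
have -> : [set y | (x, y) \in E :|: setX X [set b]] = b |: [set y | (x, y) \in E].
  by apply/setP => y; rewrite !inE /= xX orbC.
by rewrite cardsU1 inE (negbTE (X_new xX)) addnC.
Qed.

Lemma deg_snd_setU_star y :
  deg_snd (E :|: setX X [set b]) y = deg_snd E y + (if y == b then #|X| else 0).
Proof.
rewrite /deg_snd; have [->|yb] := eqVneq y b; last first.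
  by rewrite addn0; apply: eq_card => a; rewrite !inE /= (negbTE yb) andbF orbF.
have -> : [set a | (a, b) \in E :|: setX X [set b]] = [set a | (a, b) \in E] :|: X.
  by apply/setP => a; rewrite !inE /= eqxx andbT.
rewrite cardsU; suff -> : [set a | (a, b) \in E] :&: X = set0 by rewrite cards0 subn0.
by apply/setP => a; rewrite !inE; apply/negP => /andP[abE /X_new]; rewrite abE.
Qed.

Lemma card_setU_star : #|E :|: setX X [set b]| = #|E| + #|X|.
Proof.
rewrite cardsU cardsX cards1 muln1.
suff -> : E :&: setX X [set b] = set0 by rewrite cards0 subn0.
apply/setP => -[a c]; rewrite !inE /=; apply/negP => /and3P[acE aX /eqP cb].
by move: (X_new aX); rewrite -cb acE.
Qed.

End AddStar.

Definition sym_rel E : rel T := fun x y => ((x, y) \in E) || ((y, x) \in E).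

Lemma sym_relC E x y : sym_rel E x y = sym_rel E y x.
Proof. by rewrite /sym_rel orbC. Qed.

End EdgeSets.

Section Packing.
Variables (T : finType) (e : rel T) (Aj B : {set T}) (C R0 : nat).
Implicit Type E : {set T * T}.

Definition packing E : bool :=
  [&& [forall p in E, [&& p.1 \in Aj, p.2 \in B & e p.1 p.2]],
      [forall a, deg_fst E a <= C], [forall b, deg_snd E b <= C] &
      [forall b, (deg_snd E b == 0) || (R0 <= deg_snd E b)]].

Lemma packing0 : packing set0.
Proof.
have no_pairs (f : T -> T * T) : #|[set y | f y \in set0]| = 0.
  by apply/eqP; rewrite cards_eq0; apply/eqP/setP => y; rewrite !inE.
have deg_fst0 x : deg_fst set0 x = 0 := no_pairs (pair x).
have deg_snd0 x : deg_snd set0 x = 0 := no_pairs (fun a => (a, x)).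
by apply/and4P; split; apply/forallP => x; rewrite ?inE ?deg_fst0 ?deg_snd0.
Qed.

Section PackingFacts.
Variable E : {set T * T}.
Hypothesis packE : packing E.

Lemma packing_edge p : p \in E -> [&& p.1 \in Aj, p.2 \in B & e p.1 p.2].
Proof. by move=> pE; case/and4P: packE => /forall_inP/(_ p pE). Qed.

Lemma packing_deg_fst_le x : deg_fst E x <= C.
Proof. by case/and4P: packE => _ /forallP. Qed.

Lemma packing_deg_snd_le x : deg_snd E x <= C.
Proof. by case/and4P: packE => _ _ /forallP. Qed.

Lemma packing_deg_snd_ge x : 0 < deg_snd E x -> R0 <= deg_snd E x.
Proof. by case/and4P: packE => _ _ _ /forallP /(_ x); case: eqP => [->|]. Qed.

Lemma packing_deg_fst_gt0 x : 0 < deg_fst E x -> x \in Aj.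
Proof. by rewrite card_gt0 => /set0Pn[y]; rewrite inE => /packing_edge /and3P[]. Qed.

Lemma packing_deg_snd_gt0 x : 0 < deg_snd E x -> x \in B.
Proof. by rewrite card_gt0 => /set0Pn[y]; rewrite inE => /packing_edge /and3P[]. Qed.

Lemma packingU_star b (X : {set T}) :
  b \in B -> (forall a, a \in X -> [&& a \in Aj, e a b, deg_fst E a < C & (a, b) \notin E]) ->
  R0 <= deg_snd E b + #|X| <= C -> packing (E :|: setX X [set b]).
Proof.
move=> bB X_ok /andP[X_ge X_le].
have X_new a : a \in X -> (a, b) \notin E by case/X_ok/and4P.
apply/and4P; split; apply/forallP => x.
- apply/implyP; rewrite !inE => /orP[/packing_edge //|/andP[xX /eqP ->]].
  by case/X_ok/and4P: xX => -> -> _ _; rewrite bB.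
- rewrite deg_fst_setU_star //.
  have [/X_ok/and4P[_ _ ? _]|_] := boolP (x \in X); first by rewrite addn1.
  by rewrite addn0 packing_deg_fst_le.
- rewrite deg_snd_setU_star //; have [-> //|_] := eqVneq x b.
  by rewrite addn0 packing_deg_snd_le.
- rewrite deg_snd_setU_star //; have [->|_] := eqVneq x b; first by rewrite X_ge orbT.
  by rewrite addn0; case/and4P: packE => _ _ _ /forallP.
Qed.

End PackingFacts.
End Packing.

Section MaximalPacking.
Variables (T : finType) (e : rel T) (Aj B : {set T}) (C R0 : nat) (E : {set T * T}).
Hypotheses (packE : packing e Aj B C R0 E)
  (maxE : forall E', packing e Aj B C R0 E' -> #|E'| <= #|E|).

Definition free_nbrs b := [set a in Aj | e a b && (deg_fst E a < C)].

Lemma maximal_packing_saturated a b :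
  a \in Aj -> b \in B -> e a b -> (a, b) \notin E -> 0 < deg_snd E b ->
  (C <= deg_fst E a) || (C <= deg_snd E b).
Proof.
move=> aAj bB eab abE deg_b; apply: contraT; rewrite negb_or -!ltnNge => /andP[deg_a deg_b'].
have a_new x : x \in [set a] -> (x, b) \notin E by move=> /set1P ->.
have a_ok x : x \in [set a] -> [&& x \in Aj, e x b, deg_fst E x < C & (x, b) \notin E].
  by move=> /set1P ->; rewrite aAj eab deg_a abE.
have deg_ok : R0 <= deg_snd E b + #|[set a]| <= C.
  by rewrite cards1 addn1 deg_b' (leq_trans (packing_deg_snd_ge packE deg_b)).
have := maxE (packingU_star packE bB a_ok deg_ok).
by rewrite (card_setU_star a_new) cards1 addn1 ltnn.
Qed.

Lemma maximal_packing_free_nbrs b :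
  0 < R0 -> R0 <= C -> b \in B -> deg_snd E b = 0 -> #|free_nbrs b| < R0.
Proof.
move=> R0_gt0 R0_le bB deg_b; apply: contraT; rewrite -leqNgt.
move=> /exists_subset_card[X XU cardX].
have X_new a : a \in X -> (a, b) \notin E.
  by move=> _; apply/negP => abE; move: deg_b; rewrite /deg_snd (cardsD1 a) inE abE.
have X_ok a : a \in X -> [&& a \in Aj, e a b, deg_fst E a < C & (a, b) \notin E].
  by move=> aX; move: (subsetP XU a aX) (X_new a aX); rewrite !inE => /andP[-> /andP[-> ->]].
have deg_ok : R0 <= deg_snd E b + #|X| <= C by rewrite deg_b cardX leqnn R0_le.
have := maxE (packingU_star packE bB X_ok deg_ok).
rewrite (card_setU_star X_new) cardX; lia.
Qed.

Lemma maximal_packing_edge_cases a b : a \in Aj -> b \in B -> e a b ->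
  [|| (a, b) \in E, C <= deg_fst E a, C <= deg_snd E b |
      (deg_snd E b == 0) && (a \in free_nbrs b)].
Proof.
move=> aAj bB eab; have [//|abE] := boolP ((a, b) \in E).
have [//|C_a] := boolP (C <= deg_fst E a).
have [deg_b|deg_b] := posnP (deg_snd E b).
  by rewrite deg_b !inE aAj eab ltnNge C_a !orbT.
have := maximal_packing_saturated aAj bB eab abE deg_b.
by rewrite (negbTE C_a) orFb => ->; rewrite orbT.
Qed.

Hypotheses (e_sym : forall x y, e x y = e y x)
  (Aj_B : forall a b, a \in Aj -> e a b -> b \in B).

Lemma maximal_packing_deg_sum :
  \sum_(a in Aj) #|[set y | e a y]| <=
  #|E| + \sum_(a in Aj | C <= deg_fst E a) #|[set y | e a y]|
       + \sum_(b | C <= deg_snd E b) #|[set y | e b y]|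
       + \sum_(b in B | deg_snd E b == 0) #|free_nbrs b|.
Proof.
set sat_fst := [set p : T * T | ((p.1 \in Aj) && (C <= deg_fst E p.1)) && e p.1 p.2].
set sat_snd := [set p : T * T | (C <= deg_snd E p.2) && e p.1 p.2].
set free := [set p : T * T | ((p.2 \in B) && (deg_snd E p.2 == 0)) && (p.1 \in free_nbrs p.2)].
have -> : \sum_(a in Aj) #|[set y | e a y]| = #|[set p : T * T | (p.1 \in Aj) && e p.1 p.2]|.
  by rewrite (card_pairs_sum_fst (fun x y => (x \in Aj) && e x y)) sum_card_condl.
have -> : \sum_(a in Aj | C <= deg_fst E a) #|[set y | e a y]| = #|sat_fst|.
  by rewrite (card_pairs_sum_fst (fun x y => ((x \in Aj) && (C <= deg_fst E x)) && e x y))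
     sum_card_condl.
have -> : \sum_(b | C <= deg_snd E b) #|[set y | e b y]| = #|sat_snd|.
  rewrite (card_pairs_sum_snd (fun x y => (C <= deg_snd E y) && e x y)).
  rewrite (sum_card_condl (fun y => C <= deg_snd E y) (fun y x => e x y)).
  by apply: eq_bigr => y _; apply: eq_card => x; rewrite !inE e_sym.
have -> : \sum_(b in B | deg_snd E b == 0) #|free_nbrs b| = #|free|.
  rewrite (card_pairs_sum_snd
    (fun x y => ((y \in B) && (deg_snd E y == 0)) && (x \in free_nbrs y))).
  rewrite (sum_card_condl (fun y => (y \in B) && (deg_snd E y == 0))
                         (fun y x => x \in free_nbrs y)).
  by apply: eq_bigr => y _; apply: eq_card => x; rewrite !inE.
have cover :
    [set p : T * T | (p.1 \in Aj) && e p.1 p.2] \subset E :|: sat_fst :|: sat_snd :|: free.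
  apply/subsetP => -[a b]; rewrite !inE /= => /andP[aAj eab].
  have bB := Aj_B aAj eab.
  case/or4P: (maximal_packing_edge_cases aAj bB eab) => [abE|sat_a|sat_b|/andP[deg0 free_a]].
  - by rewrite abE.
  - by rewrite aAj sat_a eab orbT.
  - by rewrite sat_b eab orbT.
  - by move: free_a; rewrite !inE aAj eab bB deg0 /= => ->; rewrite !orbT.
apply: (leq_trans (subset_leq_card cover)).
apply: (leq_trans (leq_card_setU _ _).1); rewrite leq_add2r.
apply: (leq_trans (leq_card_setU _ _).1); rewrite leq_add2r.
exact: (leq_card_setU _ _).1.
Qed.

End MaximalPacking.

Section PackingGraph.
Variables (T : finType) (e : rel T) (Aj B : {set T}) (C R0 : nat) (E : {set T * T}).
Hypotheses (packE : packing e Aj B C R0 E) (Aj_B_disj : [disjoint Aj & B]).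

Lemma packing_deg0 x : deg_fst E x = 0 \/ deg_snd E x = 0.
Proof.
have [->|fst_gt0] := posnP (deg_fst E x); first by left.
have [->|snd_gt0] := posnP (deg_snd E x); first by right.
move: Aj_B_disj; rewrite disjoint_subset => /subsetP /(_ x (packing_deg_fst_gt0 packE fst_gt0)).
by rewrite inE (packing_deg_snd_gt0 packE snd_gt0).
Qed.

Lemma deg_sym_rel_le (S : {set T}) x : deg_in S (sym_rel E) x <= C.
Proof.
have sub : [set y in S | sym_rel E x y] \subset [set y | (x, y) \in E] :|: [set y | (y, x) \in E].
  by apply/subsetP => y; rewrite !inE /sym_rel => /andP[_ ->].
apply: leq_trans (subset_leq_card sub) _; apply: leq_trans (leq_card_setU _ _).1 _.
have := packing_deg_fst_le packE x; have := packing_deg_snd_le packE x.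
by case: (packing_deg0 x); rewrite /deg_fst /deg_snd => ->; lia.
Qed.

Lemma sum_deg_sym_rel (S : {set T}) :
  (forall p, p \in E -> (p.1 \in S) && (p.2 \in S)) ->
  2 * #|E| <= \sum_(x in S) deg_in S (sym_rel E) x.
Proof.
move=> E_S.
have deg_ge x : deg_fst E x + deg_snd E x <= deg_in S (sym_rel E) x.
  case: (packing_deg0 x) => ->; rewrite ?add0n ?addn0; apply: subset_leq_card;
    apply/subsetP => y; rewrite !inE /sym_rel => xyE.
    by case/andP: (E_S _ xyE) => /= -> _; rewrite xyE orbT.
  by case/andP: (E_S _ xyE) => /= _ ->; rewrite xyE.
have out_S (f : T -> nat) : (forall x, x \notin S -> f x = 0) -> \sum_(x in S) f x = \sum_x f x.
  by move=> f0; rewrite [RHS](bigID (mem S)) /= [X in _ + X]big1 ?addn0.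
rewrite mul2n -addnn {1}card_sum_deg_fst card_sum_deg_snd -!out_S -?big_split /=.
- by apply: leq_sum => x _; apply: deg_ge.
- move=> x xS; apply/eqP; rewrite cards_eq0; apply/eqP/setP => y; rewrite !inE.
  by apply/negP => /E_S /andP[_ /= yS]; rewrite yS in xS.
- move=> x xS; apply/eqP; rewrite cards_eq0; apply/eqP/setP => y; rewrite !inE.
  by apply/negP => /E_S /andP[/= yS _]; rewrite yS in xS.
Qed.

End PackingGraph.

Definition in_class (k : R) (n : nat) : bool := Rleb k (INR n) && ~~ Rleb (4 * k) (INR n).

Lemma in_classP k n : reflect (k <= INR n < 4 * k)%R (in_class k n).
Proof.
apply: (iffP andP) => [[/RlebP ? /RlebP ?]|[? ?]]; first lra.
by split; apply/RlebP; lra.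
Qed.

Lemma heavy_dyadic_class (T : finType) (A : {set T}) (d : T -> nat) (L : R) :
  let m := INR (\sum_(a in A) d a) in
  (0 < m)%R -> (2 <= L)%R -> (forall a, a \in A -> INR (d a) <= L * (m / INR #|A|))%R ->
  exists k : R, (m / INR #|A| / 2 <= k)%R /\
    (m / (4 * log2 L) <= INR (\sum_(a in A | in_class k (d a)) d a))%R.
Proof.
move=> m m_gt0 L_ge2 deg_le; set D := (m / INR #|A|)%R in deg_le *.
have A_gt0 : (0 < INR #|A|)%R.
  have [/eqP|] := posnP #|A|; last exact: (INR_ltn (m := 0)).
  by rewrite cards_eq0 => /eqP A0; move: m_gt0; rewrite /m A0 big_set0 /=; lra.
have D_gt0 : (0 < D)%R by apply: Rdiv_lt_0_compat.
have logL_ge1 := log2_ge1 L_ge2.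
have [n0 [n0_le n0_gt]] := @exists_nat_floor ((log2 L + 1) / 2) ltac:(lra).
set N := n0.+1; have N_eq : INR N = (INR n0 + 1)%R by rewrite /N S_INR.
have pow4_N := @pow4_gt_twice L N L_ge2 ltac:(rewrite N_eq; lra).
pose class_mass (i : 'I_N) := \sum_(a in A | in_class (D / 2 * 4 ^ i) (d a)) d a.
have high_le : \sum_(a in A | Rleb (D / 2) (INR (d a))) d a <= \sum_(i < N) class_mass i.
  have -> : \sum_(i < N) class_mass i =
            \sum_(a in A) \sum_(i < N) (if in_class (D / 2 * 4 ^ i) (d a) then d a else 0).
    by rewrite exchange_big; apply: eq_bigr => i _; rewrite /class_mass big_mkcondr.
  rewrite big_mkcondr /=; apply: leq_sum => a aA.
  case: (RlebP (D / 2) (INR (d a))) => // high_a.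
  have [|i i_lt i_cls] := @dyadic_class D (INR (d a)) N D_gt0.
    by split => //; have := deg_le a aA; nra.
  rewrite (bigD1 (Ordinal i_lt)) //= ifT ?leq_addr //.
  by apply/in_classP.
have low_le : (INR (\sum_(a in A | ~~ Rleb (D / 2) (INR (d a))) d a) <= m / 2)%R.
  apply: Rle_trans (INR_sum_le (x := (D / 2)%R) _) _.
    by move=> a /andP[_ /RlebP]; lra.
  have -> : (m / 2 = INR #|A| * (D / 2))%R by rewrite /D; field; lra.
  apply: Rmult_le_compat_r; first lra.
  by apply/INR_leq/subset_leq_card/subsetP => x /andP[].
have [i _ i_max] := @arg_maxnP _ (@ord0 n0) xpredT class_mass isT.
have mass_le : (INR (\sum_(j < N) class_mass j) <= INR N * INR (class_mass i))%R.
  have := @INR_sum_le _ xpredT class_mass _ (fun j _ => INR_leq (i_max j isT)).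
  by rewrite card_ord.
exists (D / 2 * 4 ^ i)%R; split.
  by have := pow_R1_Rle 4 i ltac:(lra); nra.
have m_split : m = (INR (\sum_(a in A | Rleb (D / 2) (INR (d a))) d a)
                   + INR (\sum_(a in A | ~~ Rleb (D / 2) (INR (d a))) d a))%R.
  by rewrite /m (bigID (fun a => Rleb (D / 2) (INR (d a)))) plus_INR.
have high_R := INR_leq high_le.
have mass_N : (m / (4 * log2 L) * (2 * INR N) <= m)%R.
  by apply: (Rmult_le_reg_r (4 * log2 L)); [|field_simplify]; nra.
apply: (Rmult_le_reg_r (2 * INR N)); first by rewrite N_eq; have := pos_INR n0; lra.
rewrite -/(class_mass i); lra.
Qed.

Lemma INR_sum_saturated (I : finType) (P : pred I) (f g : I -> nat) (x : R) (c : nat) :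
  (0 <= x)%R -> (forall i, P i -> INR (f i) <= x)%R -> (forall i, P i -> c <= g i) ->
  (INR c * INR (\sum_(i | P i) f i) <= INR (\sum_i g i) * x)%R.
Proof.
move=> x_ge0 f_le g_ge.
have f_sum := INR_sum_le f_le.
have g_sum : (INR #|P| * INR c <= INR (\sum_i g i))%R.
  apply: Rle_trans (INR_sum_ge (fun i Pi => INR_leq (g_ge i Pi))) _.
  rewrite big_mkcond; apply/INR_leq/leq_sum => i _; by case: (P i).
have := pos_INR c; have := pos_INR #|P|; nra.
Qed.

Section DensityArithmetic.
Local Open Scope R_scope.

(* The counting step: [mj] is the degree mass of [Aj], split into the edges of [E], those at
   saturated vertices of [Aj] ([SA]) and of [B] ([SB]), and those at [E]-isolated vertices
   ([U]).  With [C >= 63 tau] and [k >= 8 tau] this gives [tau |Aj| <= |E|/2], and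
   [R0 >= 2 tau] gives [tau |B_E| <= |E|/2]. *)
Lemma packing_density_arith (E SA SB U mj aj be bn d k l tau C R0 : R) :
  mj <= E + SA + SB + U -> C * SA <= E * (4 * k) -> C * SB <= E * d ->
  U <= bn * (R0 - 1) -> be * R0 <= E -> aj * k <= mj -> d * bn / (4 * l) <= mj ->
  d / 2 <= k -> tau = d / (16 * l) -> 1 < tau -> 1 <= l ->
  64 * tau < C + 1 -> R0 - 1 < 2 * tau <= R0 ->
  0 <= aj -> 0 <= be -> 0 <= bn -> 0 <= E ->
  tau * (aj + be) <= E.
Proof.
move=> mass SA_le SB_le U_le be_le aj_le mj_ge k_ge tau_eq tau_gt1 l_ge1 C_gt [R0_lt R0_ge]
  aj_ge0 be_ge0 bn_ge0 E_ge0.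
have d_eq : d = 16 * l * tau by rewrite tau_eq; field; lra.
have C_ge : 63 * tau <= C by lra.
have k_ge' : 8 * tau <= k by nra.
have U_half : U <= mj / 2.
  have : bn * (R0 - 1) <= bn * (2 * tau) by apply: Rmult_le_compat_l; lra.
  have : d * bn / (4 * l) = 2 * (bn * (2 * tau)) by rewrite d_eq; field; lra.
  lra.
have C_gt0 : 0 < C by lra.
have k_gt0 : 0 < k by lra.
have mass_C : C * mj <= 2 * E * (C + 6 * k).
  have : C * SB <= E * (2 * k) by apply: (Rle_trans _ _ _ SB_le); apply: Rmult_le_compat_l; lra.
  nra.
have aj_half : tau * aj <= E / 2.
  have tau_C : tau * C <= C * k / 8 by nra.
  have tau_k : tau * k <= C * k / 63 by nra.
  have slack : tau * (2 * (C + 6 * k)) <= C * k / 2 by nra.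
  have aj_mj : C * tau * (aj * k) <= C * tau * mj by apply: Rmult_le_compat_l; nra.
  have E_slack : E * (tau * (2 * (C + 6 * k))) <= E * (C * k / 2).
    exact: Rmult_le_compat_l.
  apply: (Rmult_le_reg_l (C * k)); nra.
have : tau * be <= E / 2 by nra.
lra.
Qed.

End DensityArithmetic.

Section DenseClass.
Variables (T : finType) (e : rel T) (Aj B : {set T}) (C R0 delta : nat) (k l tau : R).
Variable E : {set T * T}.
Hypotheses (packE : packing e Aj B C R0 E)
  (maxE : forall E', packing e Aj B C R0 E' -> #|E'| <= #|E|)
  (e_sym : forall x y, e x y = e y x)
  (Aj_B : forall a b, a \in Aj -> e a b -> b \in B).
Hypotheses (deg_Aj : forall a, a \in Aj -> (k <= INR #|[set y | e a y]| < 4 * k)%R)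
  (deg_B : forall b, b \in B -> #|[set y | e b y]| = delta)
  (mass_Aj : (INR delta * INR #|B| / (4 * l) <= INR (\sum_(a in Aj) #|[set y | e a y]|))%R)
  (k_ge : (INR delta / 2 <= k)%R)
  (tau_eq : tau = (INR delta / (16 * l))%R) (tau_gt1 : (1 < tau)%R) (l_ge1 : (1 <= l)%R)
  (C_gt : (64 * tau < INR C + 1)%R) (R0_bounds : (INR R0 - 1 < 2 * tau <= INR R0)%R).

Lemma maximal_packing_dense :
  (tau * (INR #|Aj| + INR #|[set b | (0 < deg_snd E b)%nat]|) <= INR #|E|)%R.
Proof.
have R0_gt0 : 0 < R0 by apply: (ltn_of_INR (m := 0)) => /=; lra.
have R0_le : R0 <= C by apply: leq_of_INR; lra.
have delta_gt0 : (0 < INR delta)%R.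
  have -> : INR delta = (16 * l * tau)%R by rewrite tau_eq; field; lra.
  nra.
have k_gt0 : (0 < k)%R by lra.
have count := INR_leq (maximal_packing_deg_sum packE maxE e_sym Aj_B).
rewrite !plus_INR in count.
have sat_fst : (INR C * INR (\sum_(a in Aj | (C <= deg_fst E a)%nat) #|[set y | e a y]|)
                <= INR #|E| * (4 * k))%R.
  rewrite card_sum_deg_fst; apply: INR_sum_saturated; first lra.
    by move=> a /andP[/deg_Aj]; lra.
  by move=> a /andP[].
have sat_snd : (INR C * INR (\sum_(b | (C <= deg_snd E b)%nat) #|[set y | e b y]|)
                <= INR #|E| * INR delta)%R.
  rewrite card_sum_deg_snd; apply: INR_sum_saturated => // [|b C_b]; first exact: pos_INR.
  rewrite deg_B; first exact: Rle_refl.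
  by apply: (packing_deg_snd_gt0 packE); apply: leq_trans C_b; apply: leq_trans R0_le.
have free : (INR (\sum_(b in B | deg_snd E b == 0%nat) #|free_nbrs e Aj C E b|)
             <= INR #|B| * (INR R0 - 1))%R.
  apply: Rle_trans (INR_sum_le (x := (INR R0 - 1)%R) _) _.
    move=> b /andP[bB /eqP deg_b].
    have := INR_leq (maximal_packing_free_nbrs packE maxE R0_gt0 R0_le bB deg_b).
    by rewrite S_INR; lra.
  apply: Rmult_le_compat_r; first by have := INR_leq R0_gt0; rewrite /=; lra.
  by apply/INR_leq/subset_leq_card/subsetP => b /andP[].
have covered : (INR #|[set b | (0 < deg_snd E b)%nat]| * INR R0 <= INR #|E|)%R.
  apply: Rle_trans
    (INR_sum_ge (P := mem [set b | (0 < deg_snd E b)%nat]) (f := deg_snd E) (x := INR R0) _) _.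
    by move=> b deg_b; apply/INR_leq/(packing_deg_snd_ge packE); move: deg_b; rewrite !inE.
  rewrite card_sum_deg_snd; apply/INR_leq; rewrite big_mkcond.
  by apply: leq_sum => b _; case: ifP.
have mass_ge : (INR #|Aj| * k <= INR (\sum_(a in Aj) #|[set y | e a y]|))%R.
  by apply: INR_sum_ge => a /deg_Aj; lra.
apply: (packing_density_arith count sat_fst sat_snd free covered mass_ge mass_Aj)
  => //; try exact: pos_INR; lra.
Qed.

End DenseClass.

Section PackingSubgraph.
Variables (T : finType) (e : rel T) (Aj B : {set T}) (C R0 : nat) (E : {set T * T}).
Hypotheses (packE : packing e Aj B C R0 E) (Aj_B_disj : [disjoint Aj & B])
  (e_sym : forall x y, e x y = e y x).

Lemma packing_subgraph (tau : R) (t : nat) :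
  Aj != set0 -> (0 < tau)%R -> (INR t - 1 < tau <= INR t)%R -> (INR C <= 64 * tau)%R ->
  (tau * (INR #|Aj| + INR #|[set b | (0 < deg_snd E b)%nat]|) <= INR #|E|)%R ->
  exists (S : {set T}) (F : rel T),
    is_subgraph e S F /\ almost_regular 64 S F /\ (tau <= avg_deg S F)%R.
Proof.
move=> Aj_neq0 tau_gt0 [t_lt t_ge] C_le dense.
set S0 := Aj :|: [set b | 0 < deg_snd E b].
have E_S0 p : p \in E -> (p.1 \in S0) && (p.2 \in S0).
  move=> pE; case/and3P: (packing_edge packE pE) => p1 _ _; rewrite !inE p1 /=.
  rewrite /deg_snd card_gt0; apply/orP; right.
  by apply/set0Pn; exists p.1; rewrite inE -surjective_pairing.
have cardS0 : (INR #|S0| <= INR #|Aj| + INR #|[set b | (0 < deg_snd E b)%nat]|)%R.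
  by rewrite -plus_INR; apply/INR_leq/(leq_card_setU _ _).1.
have S0_gt0 : (0 < INR #|S0|)%R.
  have /set0Pn[a aAj] := Aj_neq0.
  by apply: (INR_ltn (m := 0)); apply/card_gt0P; exists a; rewrite inE aAj.
have t_gt0 : 0 < t by apply: (ltn_of_INR (m := 0)) => /=; lra.
have sum_gt : 2 * (t - 1) * #|S0| < \sum_(x in S0) deg_in S0 (sym_rel E) x.
  apply: leq_trans (sum_deg_sym_rel packE Aj_B_disj E_S0); apply: ltn_of_INR.
  rewrite !mult_INR minus_INR; last exact/leP.
  rewrite /= Rmult_assoc; apply: Rmult_lt_compat_l; first lra.
  apply: (Rlt_le_trans _ (tau * INR #|S0|)); first exact: Rmult_lt_compat_r.
  apply: Rle_trans dense; apply: Rmult_le_compat_l => //; lra.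
have [S S_neq0 deg_ge] := min_deg_subgraph (@sym_relC _ E) sum_gt.
have [reg avg] : almost_regular 64 S (sym_rel E) /\ (INR t <= avg_deg S (sym_rel E))%R.
  apply: almost_regular_avg_deg => // [|x _]; first lra.
  by have := INR_leq (deg_sym_rel_le packE Aj_B_disj S x); lra.
exists S, (sym_rel E); split; last by split => //; lra.
split; [done | split; first exact: sym_relC].
move=> x y _ _ /orP[] /(packing_edge packE) /and3P[_ _] //=.
by rewrite e_sym.
Qed.

End PackingSubgraph.

Lemma exists_edge (T : finType) (e : rel T) :
  (0 < nedges_in setT e)%R -> exists x y, e x y.
Proof.
rewrite /nedges_in; set n := #|_| => n_gt0.
have /card_gt0P[[x y]] : 0 < n by apply: (ltn_of_INR (m := 0)) => /=; lra.
by rewrite inE /= => /and3P[_ _ exy]; exists x, y.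
Qed.

Lemma single_edge_subgraph (T : finType) (e : rel T) (tau : R) a y :
  simple_graph e -> e a y -> (tau <= 1)%R ->
  exists (S : {set T}) (F : rel T),
    is_subgraph e S F /\ almost_regular 64 S F /\ (tau <= avg_deg S F)%R.
Proof.
move=> [e_sym e_irr] eay tau_le1.
have deg1 x : x \in [set a; y] -> deg_in [set a; y] e x = 1.
  move=> /set2P[->|->]; rewrite /deg_in.
    rewrite -(cards1 y); apply: eq_card => z; rewrite !inE.
    have [->|zy] := eqVneq z y; first by rewrite eay orbT.
    by have [->|] := eqVneq z a; rewrite ?e_irr //= andbF.
  rewrite -(cards1 a); apply: eq_card => z; rewrite !inE.
  have [->|za] := eqVneq z a; first by rewrite e_sym eay.
  by have [->|] := eqVneq z y; rewrite ?e_irr //= ?andbF.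
have S_neq0 : [set a; y] != set0 by apply/set0Pn; exists a; rewrite set21.
have [reg avg] := @almost_regular_avg_deg _ e 64 1 _ ltac:(lra) S_neq0
  (fun x xS => eq_leq (esym (deg1 x xS))) (fun x xS => ltac:(rewrite deg1 //=; lra)).
exists [set a; y], e; split; last by split => //; apply: Rle_trans avg.
by split => //; split => // x z _ _.
Qed.

Lemma almost_biregular_compl (T : finType) (e : rel T) (L : R) (delta : nat) :
  almost_biregular L delta e ->
  exists A : {set T}, [/\ A != set0,
    forall x y, e x y -> (x \in A) = (y \notin A),
    forall b, b \notin A -> #|[set y | e b y]| = delta,
    (INR delta <= nedges_in setT e / INR #|A|)%R &
    forall a, a \in A ->
      (INR #|[set y | e a y]| <= L * (nedges_in setT e / INR #|A|))%R].
Proof.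
move=> [A [B [A_neq0 [AB_disj [AB_cover [e_AB [deg_B [delta_le_avg deg_A]]]]]]]].
have B_eq : B = ~: A.
  apply/setP => x; rewrite inE; case: (boolP (x \in A)) => xA /=.
    exact: disjointFr AB_disj xA.
  by have := in_setT x; rewrite -AB_cover inE (negbTE xA).
exists A; split => // [x y /e_AB|b bA|a /deg_A]; rewrite ?B_eq ?inE.
- by case=> -[xA yA]; [rewrite xA (negbTE yA) | rewrite (negbTE xA) yA].
- by rewrite -(deg_B b) ?B_eq ?inE // deg_setT.
- by rewrite deg_setT.
Qed.

Section Biregular.
Variables (T : finType) (e : rel T) (A : {set T}) (delta : nat) (L : R).
Hypotheses (e_sym : forall x y, e x y = e y x) (A_neq0 : A != set0)
  (e_bip : forall x y, e x y -> (x \in A) = (y \notin A))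
  (deg_B : forall b, b \notin A -> #|[set y | e b y]| = delta)
  (delta_le_avg : (INR delta <= nedges_in setT e / INR #|A|)%R)
  (deg_A : forall a, a \in A ->
     (INR #|[set y | e a y]| <= L * (nedges_in setT e / INR #|A|))%R).

Let d x := #|[set y | e x y]|.

Lemma sum_deg_compl : \sum_(b in ~: A) d b = \sum_(a in A) d a.
Proof.
transitivity #|[set p : T * T | (p.1 \in ~: A) && e p.1 p.2]|.
  by rewrite (card_pairs_sum_fst (fun x y => (x \in ~: A) && e x y)) sum_card_condl.
rewrite (card_pairs_sum_snd (fun x y => (x \in ~: A) && e x y)) [RHS]big_mkcond.
apply: eq_bigr => a _ /=.
have [aA|aA] := boolP (a \in A).
  apply: eq_card => b; rewrite !inE e_sym.
  by case: (boolP (e a b)) => [/e_bip <-|]; rewrite ?aA ?andbF.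
apply/eqP; rewrite cards_eq0; apply/eqP/setP => b; rewrite !inE.
by apply/negP => /andP[bA /e_bip]; rewrite (negbTE bA) aA.
Qed.

Lemma nedges_bipartite : nedges_in setT e = INR (\sum_(a in A) d a).
Proof.
rewrite nedges_in_sum_deg (eq_bigr d) => [|x _]; last exact: deg_setT.
rewrite (eq_bigl xpredT) => [|x]; last exact: in_setT.
rewrite (bigID (mem A)) /=.
have -> : \sum_(x | x \notin A) d x = \sum_(x in ~: A) d x by apply: eq_bigl => x; rewrite inE.
by rewrite sum_deg_compl plus_INR; field.
Qed.

Lemma sum_deg_bipartite : \sum_(a in A) d a = #|~: A| * delta.
Proof.
rewrite -sum_deg_compl -sum_nat_const; apply: eq_bigr => b.
by rewrite inE => /deg_B.
Qed.

Lemma biregular_nedges_gt0 : (0 < INR delta)%R -> (0 < nedges_in setT e)%R.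
Proof.
move=> delta_gt0; have A_gt0 : (0 < INR #|A|)%R.
  by apply: (INR_ltn (m := 0)); rewrite card_gt0.
have -> : nedges_in setT e = (nedges_in setT e / INR #|A| * INR #|A|)%R by field; lra.
by apply: Rmult_lt_0_compat; lra.
Qed.

Lemma biregular_heavy_class : (2 <= L)%R -> (0 < INR delta)%R ->
  exists k : R, [/\ (INR delta / 2 <= k)%R,
    (INR delta * INR #|~: A| / (4 * log2 L) <= INR (\sum_(a in A | in_class k (d a)) d a))%R
    & (0 < INR (\sum_(a in A | in_class k (d a)) d a))%R].
Proof.
move=> L_ge2 delta_gt0; have logL_ge1 := log2_ge1 L_ge2.
have A_gt0 : (0 < INR #|A|)%R by apply: (INR_ltn (m := 0)); rewrite card_gt0.
move: delta_le_avg deg_A; rewrite nedges_bipartite; set m := INR (\sum_(a in A) d a).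
move=> avg_ge deg_le.
have m_gt0 : (0 < m)%R.
  have -> : m = (m / INR #|A| * INR #|A|)%R by field; lra.
  by apply: Rmult_lt_0_compat; lra.
have [k [k_ge mass]] := heavy_dyadic_class m_gt0 L_ge2 deg_le; rewrite -/m in k_ge mass.
have m_eq : m = (INR delta * INR #|~: A|)%R.
  by rewrite /m sum_deg_bipartite mult_INR Rmult_comm.
exists k; split; first lra.
  by rewrite -m_eq.
by apply: Rlt_le_trans mass; apply: Rdiv_lt_0_compat; lra.
Qed.

Lemma biregular_dense_subgraph : (2 <= L)%R -> (1 < INR delta / (16 * log2 L))%R ->
  exists (S : {set T}) (F : rel T), is_subgraph e S F /\ almost_regular 64 S F /\
    (INR delta / (16 * log2 L) <= avg_deg S F)%R.
Proof.
set tau := (INR delta / (16 * log2 L))%R => L_ge2 tau_gt1.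
have logL_ge1 := log2_ge1 L_ge2.
have delta_gt0 : (0 < INR delta)%R.
  have -> : INR delta = (16 * log2 L * tau)%R by rewrite /tau; field; lra.
  nra.
have [k [k_ge mass_Aj mass_gt0]] := biregular_heavy_class L_ge2 delta_gt0.
set Aj := [set a in A | in_class k (d a)].
have sum_Aj : \sum_(a in Aj) d a = \sum_(a in A | in_class k (d a)) d a.
  by apply: eq_bigl => a; rewrite inE.
have Aj_neq0 : Aj != set0.
  by apply/negP => /eqP Aj0; move: mass_gt0; rewrite -sum_Aj Aj0 big_set0 /=; lra.
have [t [t_lt t_ge]] := @exists_nat_ceil tau ltac:(lra).
have [C [C_le C_gt]] := @exists_nat_floor (64 * tau) ltac:(lra).
have [R0 [R0_lt R0_ge]] := @exists_nat_ceil (2 * tau) ltac:(lra).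
have [E packE maxE] := arg_maxnP (fun E : {set T * T} => #|E|) (packing0 e Aj (~: A) C R0).
have Aj_B a b : a \in Aj -> e a b -> b \in ~: A.
  by rewrite !inE => /andP[aA _] /e_bip; rewrite aA => <-.
have Aj_disj : [disjoint Aj & ~: A].
  by rewrite disjoint_subset; apply/subsetP => a; rewrite !inE negbK => /andP[].
apply: (packing_subgraph packE Aj_disj e_sym Aj_neq0 _ (conj t_lt t_ge)); [lra | lra |].
apply: (maximal_packing_dense packE maxE e_sym Aj_B (k := k) (l := log2 L) (delta := delta))
  => //; try lra.
- by move=> a; rewrite inE => /andP[_ /in_classP].
- by move=> b; rewrite inE => /deg_B.
- by rewrite sum_Aj.
Qed.

End Biregular.

Theorem lemma3p5 (T : finType) (e : rel T) (L : R) (delta : nat) :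
  simple_graph e ->
  (2 <= INR delta)%R -> (INR delta <= L)%R ->
  almost_biregular L delta e ->
  exists (S : {set T}) (F : rel T),
    is_subgraph e S F /\ almost_regular 64 S F /\
    (INR delta / (16 * log2 L) <= avg_deg S F)%R.
Proof.
move=> e_simple delta_ge2 delta_le_L.
move=> /almost_biregular_compl[A [A_neq0 e_bip deg_B delta_le_avg deg_A]].
have [e_sym _] := e_simple.
have L_ge2 : (2 <= L)%R by lra.
have [tau_le1|tau_gt1] := Rle_lt_dec (INR delta / (16 * log2 L)) 1.
  have [x [y exy]] := exists_edge (biregular_nedges_gt0 A_neq0 delta_le_avg ltac:(lra)).
  exact: single_edge_subgraph e_simple exy tau_le1.
exact: biregular_dense_subgraph e_sym A_neq0 e_bip deg_B delta_le_avg deg_A L_ge2 tau_gt1.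
Qed.
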